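(* Let $F$ be a dill map on $A^{\mathbb N}$ with diameter $\delta$ and local rule $f$. The following are equivalent: (1) $F$ induces a well-defined map on the Besicovitch space, i.e. for all $x,y\in A^{\mathbb N}$, $\mathfrak d_H(x,y)=0$ implies $\mathfrak d_H(F(x),F(y))=0$; (2) $F$ is $\frac{\delta D_{\max}}{\lfloor f\rfloor}$-Lipschitz with respect to $\mathfrak d_H$, i.e. $\mathfrak d_H(F(x),F(y))\le \frac{\delta D_{\max}}{\lfloor f\rfloor}\,\mathfrak d_H(x,y)$ for all $x,y\in A^{\mathbb N}$; (3) $F$ is either a constant map or uniform.
   Context: $A$ is a finite alphabet, $A^{\mathbb N}$ the infinite sequences over $A$, $x_{[i,j)}=x_i\cdots x_{j-1}$. A dill map with diameter $\delta\ge1$ and local rule $f:A^\delta\to A^+$ (nonempty words) is $F(x)=f(x_{[0,\delta)})f(x_{[1,\delta+1)})\cdots$. Lower norm $\lfloor f\rfloor=\min\{|f(u)|:u\in A^\delta\}$, upper norm $\lceil f\rceil=\max\{|f(u)|:u\in A^\delta\}$; $F$ is uniform if $\lfloor f\rfloor=\lceil f\rceil$. For words $u,v$ of equal length, $d_H(u,v)$ is the number of positions where they differ. $D_{\max}=\max\{d_H(f(u),f(v)):u,v\in A^\delta\}$ (taken over pairs with $|f(u)|=|f(v)|$). The Besicovitch pseudo-metric is $\mathfrak d_H(x,y)=\limsup_{l\to\infty}\frac{d_H(x_{[0,l)},y_{[0,l)})}{l}$. *)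

From mathcomp Require Import all_boot all_order all_algebra.
From mathcomp Require Import all_classical all_reals.
From mathcomp Require Import constructive_ereal ereal sequences.
Set Implicit Arguments. Unset Strict Implicit. Unset Printing Implicit Defensive.
Import Order.TTheory GRing.Theory Num.Theory.

Section Dill.
Variable A : finType.

Definition window (d : nat) (x : nat -> A) (k : nat) : d.-tuple A :=
  [tuple x (k + i) | i < d].

(* F(x) = f(x_[0,d)) f(x_[1,d+1)) ...  ; since every f u is nonempty,
   the first n+1 blocks have total length >= n+1, so the letter at
   position n is read off their concatenation (default x 0 never used). *)
Definition dill (d : nat) (f : d.-tuple A -> seq A) (x : nat -> A) : nat -> A :=
  fun n => nth (x 0) (flatten [seq f (window d x k) | k <- iota 0 n.+1]) n.

Definition hamw (u v : seq A) : nat := count (fun p => p.1 != p.2) (zip u v).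

Definition hamp (x y : nat -> A) (l : nat) : nat := \sum_(i < l) (x i != y i).

Definition upper_norm d (f : d.-tuple A -> seq A) : nat := \max_(u : d.-tuple A) size (f u).
Definition lower_norm d (f : d.-tuple A -> seq A) : nat :=
  \big[minn/upper_norm f]_(u : d.-tuple A) size (f u).

Definition uniform d (f : d.-tuple A -> seq A) : Prop := lower_norm f = upper_norm f.

Definition Dmax d (f : d.-tuple A -> seq A) : nat :=
  \max_(u : d.-tuple A) \max_(v : d.-tuple A | size (f u) == size (f v)) hamw (f u) (f v).

End Dill.

Definition besic (R : realType) (A : finType) (x y : nat -> A) : \bar R :=
  limn_esup (fun l => ((hamp x y l)%:R / l%:R : R)%:E).

(* If f is uniform with block length L, the first n L letters of F x are
   determined by x_[0, n + d), and a disagreement of x and y affects at most d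
   windows, hence at most d blocks, each in at most D_max positions; dividing
   by n L gives the Lipschitz bound, which in turn trivially preserves
   Besicovitch distance 0 (and a constant map is trivially Lipschitz).

   Conversely, suppose F preserves distance 0 and f is not uniform.  Fix a
   letter a and let s = F(a^ω); it has period r = |f(a^d)|.  Since p a^ω and
   a^ω are at distance 0, s has period |W p| for every word p, where W p is the
   image of p padded with a.  Non-uniformity yields words q, q' of the same
   length with |W q| < |W q'|.  For a periodic T starting with a^(d-1), q T and
   q' T are at distance 0, so W q F(T) and W q' F(T) must be, and as F(T) is
   periodic this forces F(T) to have period c = |W q'| - |W q|.  Taking
   T = (a^(d-1) p a^K)^ω, F(T) contains W p followed by a window of s of length
   at least c + r; periodicity then gives F(p a^ω) = s for every p, and since
   (F x)_n only depends on x_[0, n + d), F is constant. *)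

From mathcomp Require Import all_boot all_order all_algebra.
From mathcomp Require Import all_classical all_reals.
From mathcomp Require Import constructive_ereal ereal sequences.
From mathcomp Require Import topology normedtype.
From mathcomp Require Import zify ring lra.
Import Order.TTheory GRing.Theory Num.Theory.

Section limn_esup_bounds.
Variable R : realType.
Implicit Types (u : (\bar R)^nat) (a : \bar R).
Local Open Scope ereal_scope.

Lemma limn_esup_le_eventually u a N :
  (forall n, (N <= n)%N -> u n <= a) -> limn_esup u <= a.
Proof.
move=> uNa; rewrite limn_esup_lim; apply: lime_le; first exact: is_cvg_esups.
near=> n; apply: ge_ereal_sup => _ [k /= nk <-]; apply: uNa.
apply: leq_trans nk; near: n; by exists N.
Unshelve. all: by end_near. Qed.

Lemma limn_esup_ge_often u a :
  (forall N, exists2 n, (N <= n)%N & a <= u n) -> a <= limn_esup u.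
Proof.
move=> often; rewrite limn_esup_lim; apply: lime_ge; first exact: is_cvg_esups.
apply: nearW => N; have [n Nn aun] := often N.
by apply: le_trans aun _; apply: ereal_sup_ubound; exists n.
Qed.

Lemma limn_esup_lt_eventually u a :
  limn_esup u < a -> exists N, forall n, (N <= n)%N -> u n < a.
Proof.
move=> ua; apply: contrapT => never.
suff : a <= limn_esup u by rewrite leNgt ua.
apply: limn_esup_ge_often => N; apply: contrapT => small; apply: never.
by exists N => n Nn; rewrite ltNge; apply/negP => aun; apply: small; exists n.
Qed.

End limn_esup_bounds.

Definition rate (R : realType) (v : nat -> nat) : (\bar R)^nat :=
  fun l => ((v l)%:R / l%:R)%:E.

Section rate.
Variable R : realType.
Implicit Types u v : nat -> nat.
Local Open Scope ereal_scope.

Lemma rate_ge0 v l : 0 <= rate R v l.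
Proof. by rewrite lee_fin divr_ge0. Qed.

Lemma rate_le1 v l : (v l <= l)%N -> rate R v l <= 1.
Proof.
move=> vl; rewrite lee_fin; case: l vl => [|l] vl; first by rewrite invr0 mulr0.
by rewrite ler_pdivrMr ?ltr0n // mul1r ler_nat.
Qed.

Lemma limn_esup_rate_ge0 v : 0 <= limn_esup (rate R v).
Proof. by apply: limn_esup_ge_often => N; exists N => //; exact: rate_ge0. Qed.

Lemma limn_esup_rate_fin_num v :
  (forall l, v l <= l)%N -> limn_esup (rate R v) \is a fin_num.
Proof.
move=> vl; rewrite ge0_fin_numE ?limn_esup_rate_ge0 //.
apply: (@le_lt_trans _ _ 1); last exact: ltey.
by apply: (@limn_esup_le_eventually _ _ _ 0) => l _; exact: rate_le1.
Qed.

Lemma limn_esup_rate_bounded v N :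
  (forall l, v l <= N)%N -> limn_esup (rate R v) = 0.
Proof.
move=> vN; apply/eqP; rewrite eq_le limn_esup_rate_ge0 andbT.
apply/lee_addgt0Pr => e e0; rewrite add0e.
have [M NeM] : exists M : nat, (N%:R / e < M%:R)%R.
  by exists (Num.truncn (N%:R / e)%R).+1; exact: truncnS_gt.
apply: (@limn_esup_le_eventually _ _ _ M.+1) => l Ml; rewrite lee_fin.
have l0 : (0 < l%:R :> R)%R by rewrite ltr0n; apply: leq_trans Ml.
rewrite ler_pdivrMr // (@le_trans _ _ N%:R%R) ?ler_nat //.
rewrite -ler_pdivrMl // mulrC; apply/ltW/(lt_le_trans NeM).
by rewrite ler_nat ltnW.
Qed.


Lemma rate_rescale_le u v (C L K l : nat) : let n := (l %/ L)%N in
  (0 < L)%N -> (0 < n)%N -> (u l <= C * (v n + K))%N ->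
  ((u l)%:R / l%:R <= C%:R / L%:R * ((v n)%:R / n%:R + K%:R / n%:R) :> R)%R.
Proof.
move=> n L0 n0 ul; have nLl : (n * L <= l)%N := leq_divM l L.
have nL0 : (0 < n * L)%N by rewrite muln_gt0 n0.
have -> : (C%:R / L%:R * ((v n)%:R / n%:R + K%:R / n%:R) =
           (C * (v n + K))%:R / (n * L)%:R :> R)%R.
  by rewrite natrM natrD natrM; field; rewrite !pnatr_eq0 -!lt0n n0 L0.
rewrite ler_pdivrMr ?ltr0n ?(leq_trans nL0) // mulrAC ler_pdivlMr ?ltr0n //.
by rewrite -!natrM ler_nat leq_mul.
Qed.

Lemma limn_esup_rate_rescale u v (C L K : nat) :
  (0 < L)%N -> (forall n, v n <= n)%N ->
  (forall l, u l <= C * (v (l %/ L) + K))%N ->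
  limn_esup (rate R u) <= (C%:R / L%:R)%:E * limn_esup (rate R v).
Proof.
move=> L0 vn ul; set c : R := (C%:R / L%:R)%R.
have c0 : (0 <= c)%R by rewrite divr_ge0.
rewrite -(fineK (limn_esup_rate_fin_num v vn)); set b := fine _.
rewrite -EFinM; apply/lee_addgt0Pr => e e0.
set e1 : R := (e / (2 * (c + 1)))%R.
have ce1 : (c * e1 <= e / 2)%R.
  rewrite /e1 mulrA ler_pdivrMr ?mulr_gt0 ?ltr_wpDl //.
  have -> : (e / 2 * (2 * (c + 1)) = c * e + e)%R by field.
  by rewrite lerDl ltW.
have [N1 vN1] : exists N, forall n, (N <= n)%N -> rate R v n < (b + e1)%:E.
  apply: limn_esup_lt_eventually.
  by rewrite -(fineK (limn_esup_rate_fin_num v vn)) lte_fin ltrDl divr_gt0 ?mulr_gt0 ?ltr_wpDl.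
have [N2 KN2] : exists N : nat, (2 * c * K%:R / e < N%:R)%R.
  by exists (Num.truncn (2 * c * K%:R / e)%R).+1; exact: truncnS_gt.
apply: (@limn_esup_le_eventually _ _ _ ((N1 + N2).+1 * L)) => l hl.
set n := (l %/ L)%N.
have Nn : ((N1 + N2).+1 <= n)%N by rewrite -(mulnK (N1 + N2).+1 L0) leq_div2r.
have n_gt0 : (0 < n)%N by lia.
have n0 : (0 < n%:R :> R)%R by rewrite ltr0n.
have vbe : ((v n)%:R / n%:R < b + e1 :> R)%R by rewrite -lte_fin; apply: vN1; lia.
have cKn : (c * (K%:R / n%:R) <= e / 2)%R.
  have N2n : (N2%:R <= n%:R :> R)%R by rewrite ler_nat; lia.
  move: KN2; rewrite ltr_pdivrMr // => KN2.
  rewrite mulrA ler_pdivrMr //; nra.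
have := @rate_rescale_le u v C L K l L0 n_gt0 (ul l).
rewrite -/c -/n mulrDr => /le_trans; apply.
have : (c * ((v n)%:R / n%:R) <= c * (b + e1))%R by rewrite ler_wpM2l // ltW.
lra.
Qed.
End rate.

Section hamming.
Context {A : finType} (x y : nat -> A).

Lemma hampS l : hamp x y l.+1 = (hamp x y l + (x l != y l))%N.
Proof. by rewrite /hamp big_ord_recr. Qed.

Lemma hampD l m :
  hamp x y (l + m) = (hamp x y l + \sum_(k < m) (x (l + k) != y (l + k)))%N.
Proof. by rewrite /hamp big_split_ord. Qed.

Lemma hamp_le l : (hamp x y l <= l)%N.
Proof.
elim: l => [|l IH]; first by rewrite /hamp big_ord0.
by rewrite hampS -addn1 leq_add // leq_b1.
Qed.

Lemma leq_hamp {l m} : (l <= m)%N -> (hamp x y l <= hamp x y m)%N.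
Proof.
by move=> /subnKC <-; rewrite hampD leq_addr.
Qed.

Lemma hamp_eq_from N : (forall j, (N <= j)%N -> x j = y j) ->
  forall l, (hamp x y l <= N)%N.
Proof.
move=> xy; elim=> [|l IH]; first by rewrite /hamp big_ord0.
case: (ltnP l N) => lN; first by rewrite (leq_trans (leq_hamp lN)) ?hamp_le.
by rewrite hampS xy // eqxx addn0.
Qed.

End hamming.

Section besicovitch.
Variable R : realType.
Context {A : finType}.
Implicit Types x y : nat -> A.
Local Open Scope ereal_scope.

Lemma besic_ge0 x y : 0 <= besic R x y.
Proof. exact: limn_esup_rate_ge0. Qed.

Lemma besic_eq_from x y N :
  (forall j, (N <= j)%N -> x j = y j) -> besic R x y = 0.
Proof. by move=> xy; apply: (@limn_esup_rate_bounded R _ N); exact: hamp_eq_from. Qed.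

Lemma besic_progression_neq0 x y p0 P : (0 < P)%N ->
  (forall t, x (p0 + t * P)%N != y (p0 + t * P)%N) -> besic R x y != 0.
Proof.
move=> P0 xy.
have hamp_prog n : (n.+1 <= hamp x y (p0 + n * P).+1)%N.
  elim: n => [|n IH]; first by have := xy 0%N; rewrite mul0n addn0 hampS => ->; rewrite addn1.
  rewrite hampS xy addn1 ltnS (leq_trans IH) //.
  by apply: leq_hamp; rewrite ltn_add2l ltn_mul2r P0 ltnSn.
suff : ((1 / (2 * P)%:R : R)%R)%:E <= besic R x y.
  by apply: contraTneq => ->; rewrite lee_fin -ltNge divr_gt0 // ltr0n muln_gt0.
apply: limn_esup_ge_often => N; set n := maxn N p0.
have [Nn p0n] : (N <= n)%N /\ (p0 <= n)%N by rewrite leq_maxl leq_maxr.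
have nnP : (n <= n * P)%N by rewrite leq_pmulr.
exists (p0 + n * P).+1; first by lia.
rewrite lee_fin ler_pdivrMr ?ltr0n ?muln_gt0 // mulrAC ler_pdivlMr ?ltr0n //.
rewrite mul1r -natrM ler_nat (leq_trans _ (leq_mul (hamp_prog n) (leqnn _))) //.
rewrite mulnA mulSn mulnC; lia.
Qed.

End besicovitch.

Definition periodic {T : Type} (x : nat -> T) (c : nat) := forall j, x (j + c) = x j.

Lemma periodicM {T : Type} {x : nat -> T} {c} m : periodic x c -> periodic x (m * c).
Proof.
move=> xc; elim: m => [|m IH] j; first by rewrite addn0.
by rewrite mulSn addnA IH xc.
Qed.

Lemma periodic_mod {T : Type} {x : nat -> T} {c} j :
  periodic x c -> x j = x (j %% c).
Proof. by move=> xc; rewrite {1}(divn_eq j c) addnC periodicM. Qed.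

Definition shiftn {T : Type} (m : nat) (x : nat -> T) : nat -> T := fun j => x (m + j).

Lemma shiftn_periodic {T : Type} (x : nat -> T) c : periodic x c -> shiftn c x = x.
Proof. by move=> xc; apply: funext => j; rewrite /shiftn addnC xc. Qed.

Section blocks.
Context {A : finType} {d : nat} (f : d.-tuple A -> seq A).
Implicit Types x y : nat -> A.

Definition blocks (x : nat -> A) (m : nat) : seq A :=
  flatten [seq f (window d x k) | k <- iota 0 m].

Lemma window_shiftn x m k : window d x (m + k) = window d (shiftn m x) k.
Proof. by apply: eq_from_tnth => i; rewrite !tnth_mktuple /shiftn addnA. Qed.

Lemma blocksD x m n : blocks x (m + n) = blocks x m ++ blocks (shiftn m x) n.
Proof.
rewrite /blocks iotaD map_cat flatten_cat add0n; congr (_ ++ _).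
rewrite -[in iota m n](addn0 m) iotaDl -map_comp; congr flatten.
by apply: eq_map => k /=; rewrite window_shiftn.
Qed.

Lemma blocks1 x : blocks x 1 = f (window d x 0).
Proof. by rewrite /blocks /= cats0. Qed.

Lemma blocks_eq_prefix {x y m} :
  (forall j, (j.+1 < m + d)%N -> x j = y j) -> blocks x m = blocks y m.
Proof.
move=> xy; congr flatten; apply/eq_in_map => k; rewrite mem_iota add0n => km.
congr f; apply: eq_from_tnth => i; rewrite !tnth_mktuple xy //.
by have := ltn_ord i; lia.
Qed.

Lemma size_blocks_const {L} : (forall u, size (f u) = L) ->
  forall x m, size (blocks x m) = (m * L)%N.
Proof.
move=> fL x m; elim: m x => [|m IH] x //.
by rewrite -addn1 blocksD size_cat IH blocks1 fL mulnDl mul1n.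
Qed.

Hypothesis f_neq_nil : forall u, (0 < size (f u))%N.

Lemma size_blocks x m : (m <= size (blocks x m))%N.
Proof.
elim: m x => [|m IH] x //.
by rewrite -addn1 blocksD size_cat blocks1 leq_add.
Qed.

Lemma dill_blocks {x m i} :
  (i < size (blocks x m))%N -> dill f x i = nth (x 0) (blocks x m) i.
Proof.
move=> im; rewrite /dill -/(blocks x i.+1).
case: (leqP m i.+1) => mi; first by rewrite -(subnKC mi) blocksD nth_cat im.
by rewrite -(subnKC (ltnW mi)) blocksD nth_cat (leq_trans _ (size_blocks x i.+1)).
Qed.

Lemma dill_shiftn x m j :
  dill f x (size (blocks x m) + j) = dill f (shiftn m x) j.
Proof.
have lt_j : (size (blocks x m) + j < size (blocks x (m + j.+1)))%N.
  by rewrite blocksD size_cat ltn_add2l (leq_trans _ (size_blocks _ _)).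
rewrite (dill_blocks lt_j) blocksD nth_cat ltnNge leq_addr /= addKn.
rewrite /dill -/(blocks (shiftn m x) j.+1); apply: set_nth_default.
exact: size_blocks.
Qed.

Lemma dill_eq_prefix x y m i :
  (forall j, (j.+1 < m + d)%N -> x j = y j) ->
  (i < size (blocks x m))%N -> dill f x i = dill f y i.
Proof.
move=> xy im; have im' := im; rewrite (blocks_eq_prefix xy) in im'.
rewrite (dill_blocks im) (dill_blocks im') (blocks_eq_prefix xy).
exact: set_nth_default.
Qed.

Lemma dill_periodic x n : periodic x n -> periodic (dill f x) (size (blocks x n)).
Proof. by move=> xn j; rewrite addnC dill_shiftn shiftn_periodic. Qed.

End blocks.

Section uniform_lipschitz.
Context {A : finType} {d : nat} (f : d.-tuple A -> seq A).
Implicit Types x y : nat -> A.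

Lemma uniform_size : uniform f -> forall u, size (f u) = lower_norm f.
Proof.
move=> fU u; apply/eqP; rewrite eqn_leq; apply/andP; split.
  by rewrite fU /upper_norm (leq_bigmax_cond u).
by have := @bigmin_le _ nat _ (upper_norm f) u (fun u => size (f u)); rewrite minEnat.
Qed.

Lemma hamw_nth (a : A) (s t : seq A) : size s = size t ->
  hamw s t = \sum_(i < size s) (nth a s i != nth a t i).
Proof.
elim: s t => [|b s IH] [|c t] //=; first by rewrite big_ord0.
by move=> [] /IH st; rewrite /hamw /= -/(hamw s t) st big_ord_recl.
Qed.

Lemma hamw_le_Dmax u v : size (f u) = size (f v) -> (hamw (f u) (f v) <= Dmax f)%N.
Proof.
move=> uv; apply: leq_trans (leq_bigmax_cond u isT).
by apply: (leq_bigmax_cond v (P := fun v => size (f u) == size (f v))); apply/eqP.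
Qed.

Lemma window_neq_le x y k :
  ((window d x k != window d y k) <= \sum_(i < d) (x (k + i) != y (k + i)))%N.
Proof.
case: eqP => [_|neq] //=; rewrite lt0n; apply: contra_notN neq => /eqP sum0.
apply: eq_from_tnth => i; rewrite !tnth_mktuple; apply/eqP.
have : ((x (k + i) != y (k + i)) <= \sum_(j < d) (x (k + j) != y (k + j)))%N.
  by rewrite (bigD1 i) //= leq_addr.
by rewrite sum0 leqn0 eqb0 negbK.
Qed.

Lemma sum_window_neq_le x y m :
  (\sum_(k < m) (window d x k != window d y k) <= d * hamp x y (m + d))%N.
Proof.
apply: (@leq_trans (\sum_(k < m) \sum_(i < d) (x (k + i) != y (k + i)))).
  by apply: leq_sum => k _; exact: window_neq_le.
rewrite exchange_big /= -[X in (_ <= X * _)%N]card_ord -sum_nat_const.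
apply: leq_sum => i _.
have im : (i + m <= m + d)%N by rewrite addnC leq_add2l ltnW.
apply: leq_trans (leq_hamp x y im).
by rewrite hampD; under eq_bigr do rewrite addnC; exact: leq_addl.
Qed.

Hypothesis f_neq_nil : forall u, (0 < size (f u))%N.

Lemma hamp_dill_const_size {L} : (forall u, size (f u) = L) -> forall x y m,
  (hamp (dill f x) (dill f y) (m * L) <=
     Dmax f * \sum_(k < m) (window d x k != window d y k))%N.
Proof.
move=> fL x y; elim=> [|m IH]; first by rewrite mul0n /hamp big_ord0.
rewrite mulSnr hampD big_ord_recr /= mulnDr leq_add //.
have dill_block z i : (i < L)%N -> dill f z (m * L + i) = nth (z 0) (f (window d z m)) i.
  move=> iL; rewrite -(size_blocks_const f fL z m) dill_shiftn //.
  have i1 : (i < size (blocks f (shiftn m z) 1))%N by rewrite blocks1 fL.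
  rewrite (dill_blocks f f_neq_nil i1) blocks1 -[m]addn0 window_shiftn addn0.
  by apply: set_nth_default; rewrite fL.
under eq_bigr => i _ do rewrite !dill_block // [nth (y 0) _ _](@set_nth_default _ _ (x 0)) ?fL //.
case: eqP => [->|neq]; first by rewrite big1 // => i _; rewrite eqxx.
rewrite muln1 -(fL (window d x m)) -hamw_nth ?fL //; exact/hamw_le_Dmax/etrans/esym.
Qed.

Lemma hamp_dill_le : uniform f -> forall x y l,
  (hamp (dill f x) (dill f y) l <=
     d * Dmax f * (hamp x y (l %/ lower_norm f) + d.+1))%N.
Proof.
move=> fU x y l; set L := lower_norm f; set n := (l %/ L)%N.
have fL := uniform_size fU.
have L0 : (0 < L)%N by rewrite /L -(fL (window d x 0)).
apply: leq_trans (leq_hamp _ _ (ltnW (ltn_ceil l L0))) _.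
apply: leq_trans (hamp_dill_const_size fL x y n.+1) _.
rewrite [d * _]mulnC -mulnA leq_mul2l; apply/orP; right.
apply: leq_trans (sum_window_neq_le x y n.+1) _.
apply: leq_mul => //; rewrite hampD hampS -addnA leq_add2l -[d.+1]add1n leq_add ?leq_b1 //.
by rewrite -[X in (_ <= X)%N]card_ord -sum1_card leq_sum // => i _; exact: leq_b1.
Qed.

Lemma dill_lipschitz (R : realType) : uniform f -> forall x y,
  (besic R (dill f x) (dill f y) <=
     ((d * Dmax f)%:R / (lower_norm f)%:R : R)%:E * besic R x y)%E.
Proof.
move=> fU x y; have L0 : (0 < lower_norm f)%N by rewrite -(uniform_size fU (window d x 0)).
apply: (@limn_esup_rate_rescale R _ _ _ _ d.+1 L0 (hamp_le x y)).
exact: hamp_dill_le.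
Qed.

End uniform_lipschitz.

Section periodic_agreement.
Context {T : Type} {X s : nat -> T}.

Lemma periodic_of_window {c r k} : (0 < r)%N -> periodic X c -> periodic s r ->
  (forall i, (i < c + r)%N -> X (k + i) = s i) -> periodic s c.
Proof.
move=> r0 Xc sr Xs j; have jr := ltn_pmod j r0.
have -> : (j + c = (j %% r + c) + j %/ r * r)%N by rewrite {1}(divn_eq j r); lia.
rewrite periodicM // -Xs; last by lia.
rewrite addnA Xc Xs; last by lia.
by rewrite -(periodic_mod j sr).
Qed.

Lemma eq_from_window {c k} : (0 < c)%N -> periodic X c -> periodic s c ->
  (forall i, (i < c)%N -> X (k + i) = s i) -> forall i, X (k + i) = s i.
Proof.
move=> c0 Xc sc Xs i; rewrite {1}(divn_eq i c) addnCA addnC periodicM //.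
by rewrite Xs ?ltn_pmod // -(periodic_mod i sc).
Qed.

Lemma eq_from_shift {c B k} : (0 < c)%N -> periodic X c -> periodic s c ->
  periodic s B -> (forall i, X (k + B + i) = s i) -> forall i, X (k + i) = s i.
Proof.
move=> c0 Xc sc sB Xs i.
rewrite -(periodicM B Xc) -(periodicM B sc) -(prednK c0) mulnS.
have -> : (k + i + (B + B * c.-1) = k + B + (i + B * c.-1))%N by lia.
by rewrite Xs [B + _]addnC addnA sB.
Qed.
End periodic_agreement.

(* Otherwise a mismatch X (j + c) <> X j recurs along a progression of
   difference P, where u and v then disagree with positive density. *)
Lemma periodic_of_besic0 (R : realType) (A : finType) (u v X : nat -> A) P B c :
  besic R u v = 0%E -> (0 < P)%N -> periodic X P ->
  (forall i, u (B + c + i) = X i) -> (forall i, v (B + i) = X i) ->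
  periodic X c.
Proof.
move=> uv0 P0 XP Xu Xv j; apply/eqP; apply: contraT => neq.
suff : besic R u v != 0%E by rewrite uv0 eqxx.
apply: (@besic_progression_neq0 R A u v (B + c + j) P P0) => t.
have -> : (B + c + j + t * P = B + c + (j + t * P))%N by rewrite !addnA.
rewrite Xu periodicM // -addnA Xv [c + _]addnC addnAC periodicM //.
by rewrite eq_sym.
Qed.

Definition padded {A : Type} (a : A) (p : seq A) : nat -> A := fun j => nth a p j.

Definition prefixed {A : Type} (a : A) (q : seq A) (T : nat -> A) : nat -> A :=
  fun j => if (j < size q)%N then nth a q j else T (j - size q)%N.

Definition repeat_seq {A : Type} (a : A) (w : seq A) : nat -> A :=
  fun j => nth a w (j %% size w).

Lemma shiftn_prefixed {A : Type} (a : A) q T : shiftn (size q) (prefixed a q T) = T.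
Proof. by apply: funext => j; rewrite /shiftn /prefixed ltnNge leq_addr addKn. Qed.

Lemma prefixed_cst {A : Type} (a : A) p : prefixed a p (cst a) = padded a p.
Proof. by apply: funext => j; rewrite /prefixed /padded; case: ltnP => // ?; rewrite nth_default. Qed.

Lemma shiftn_padded {A : Type} (a : A) p : shiftn (size p) (padded a p) = cst a.
Proof. by rewrite -prefixed_cst shiftn_prefixed. Qed.

Lemma repeat_seq_periodic {A : Type} (a : A) w : periodic (repeat_seq a w) (size w).
Proof. by move=> j; rewrite /repeat_seq modnDr. Qed.

Section image_word.
Context {A : finType} {d : nat} (f : d.-tuple A -> seq A).

Definition image_word (a : A) (p : seq A) := blocks f (padded a p) (size p).

Lemma blocks_prefixed a q T : (forall j, (j.+1 < d)%N -> T j = a) ->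
  blocks f (prefixed a q T) (size q) = image_word a q.
Proof.
move=> Ta; apply: blocks_eq_prefix => j jd; rewrite /prefixed /padded.
by case: ltnP => // qj; rewrite nth_default // Ta //; lia.
Qed.

Lemma size_image_word_tuple a (u : d.-tuple A) : (0 < d)%N ->
  size (image_word a u) = (size (f u) + size (image_word a (behead u)))%N.
Proof.
move=> d0; rewrite /image_word size_behead !size_tuple.
have -> : blocks f (padded a u) d = blocks f (padded a u) (1 + d.-1) by rewrite add1n prednK.
rewrite blocksD size_cat blocks1.
have -> : window d (padded a u) 0 = u.
  by apply: eq_from_tnth => i; rewrite tnth_mktuple /padded add0n (tnth_nth a).
congr (_ + size _)%N; congr blocks.
by apply: funext => j; rewrite /shiftn /padded add1n nth_behead.
Qed.

Lemma image_word_size_gap a : (0 < d)%N -> (exists u v, size (f u) != size (f v)) ->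
  exists q q', size q = size q' /\ (size (image_word a q) < size (image_word a q'))%N.
Proof.
move=> d0 [u [v fuv]].
suff [q [q' [qq' neq]]] : exists q q',
    size q = size q' /\ size (image_word a q) != size (image_word a q').
  by case: ltngtP neq => // lt _; [exists q, q' | exists q', q].
have [eq_behead|] := eqVneq (size (image_word a (behead u))) (size (image_word a (behead v))).
  by exists u, v; rewrite !size_image_word_tuple // eq_behead eqn_add2r !size_tuple.
by exists (behead u), (behead v); rewrite !size_behead !size_tuple.
Qed.

Hypothesis f_neq_nil : forall u, (0 < size (f u))%N.

Lemma dill_prefixed a q T : (forall j, (j.+1 < d)%N -> T j = a) ->
  forall i, dill f (prefixed a q T) (size (image_word a q) + i) = dill f T i.
Proof.
by move=> Ta i; rewrite -(blocks_prefixed a q T Ta) dill_shiftn // shiftn_prefixed.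
Qed.

Lemma dill_padded a p i :
  dill f (padded a p) (size (image_word a p) + i) = dill f (cst a) i.
Proof. by rewrite -prefixed_cst dill_prefixed. Qed.

End image_word.

Section zero_preserving.
Variables (R : realType) (A : finType) (d : nat) (f : d.-tuple A -> seq A).
Hypothesis f_neq_nil : forall u, (0 < size (f u))%N.
Hypothesis dill_besic0 :
  forall x y, besic R x y = 0%E -> besic R (dill f x) (dill f y) = 0%E.
Variable a : A.

Lemma size_blocks_cst m :
  size (blocks f (cst a) m) = (m * size (blocks f (cst a) 1))%N.
Proof.
elim: m => [|m IH] //.
by rewrite -addn1 blocksD size_cat IH mulnDl mul1n.
Qed.

Lemma dill_cst_periodic : periodic (dill f (cst a)) (size (blocks f (cst a) 1)).
Proof. exact: dill_periodic. Qed.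

Lemma dill_cst_periodic_image_word p :
  periodic (dill f (cst a)) (size (image_word f a p)).
Proof.
apply: (@periodic_of_besic0 R A (dill f (padded a p)) (dill f (cst a)) _
  (size (blocks f (cst a) 1)) 0).
- by apply/dill_besic0/(@besic_eq_from R A _ _ (size p)) => j pj; rewrite /padded nth_default.
- exact: size_blocks.
- exact: dill_cst_periodic.
- exact: dill_padded.
- by [].
Qed.

Lemma dill_periodic_gap {T s q q'} : (0 < s)%N -> periodic T s ->
  (forall j, (j.+1 < d)%N -> T j = a) -> size q = size q' ->
  (size (image_word f a q) <= size (image_word f a q'))%N ->
  periodic (dill f T) (size (image_word f a q') - size (image_word f a q)).
Proof.
move=> s0 Ts Ta qq' le_qq'.
apply: (@periodic_of_besic0 R A (dill f (prefixed a q' T)) (dill f (prefixed a q T)) _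
  (size (blocks f T s)) (size (image_word f a q))).
- apply/dill_besic0/(@besic_eq_from R A _ _ (size q)) => j qj.
  by rewrite /prefixed -qq' ltnNge qj.
- exact: leq_trans s0 (size_blocks _ _ _ _).
- exact: dill_periodic.
- by move=> i; rewrite subnKC // dill_prefixed.
- exact: dill_prefixed.
Qed.

(* (a^(d-1) p a^K)^ω: the leading a's make prefixing by a word harmless, and
   after the image of p its image runs through K blocks of F(a^ω). *)
Definition test_seq p K := repeat_seq a (nseq d.-1 a ++ p ++ nseq K a).

Lemma test_seq_head p K j : (j < d.-1)%N -> test_seq p K j = a.
Proof.
move=> jd; rewrite /test_seq /repeat_seq modn_small; last first.
  by rewrite !size_cat size_nseq; lia.
by rewrite nth_cat size_nseq jd nth_nseq jd.
Qed.

Lemma test_seq_mid p K j : (j < size p + K + d.-1)%N ->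
  test_seq p K (d.-1 + j) = padded a p j.
Proof.
move=> jw; set w := nseq d.-1 a ++ p ++ nseq K a.
have sw : size w = (d.-1 + size p + K)%N by rewrite !size_cat !size_nseq addnA.
have Tw : periodic (test_seq p K) (size w) by exact: repeat_seq_periodic.
case: (ltnP (d.-1 + j) (size w)) => jsw.
  rewrite /test_seq /repeat_seq -/w modn_small // nth_cat size_nseq ltnNge leq_addr /= addKn.
  by rewrite nth_cat /padded; case: ltnP => // pj; rewrite nth_nseq nth_default //; case: ifP.
rewrite -(subnK jsw) Tw test_seq_head; last by rewrite sw; lia.
by rewrite /padded nth_default //; rewrite sw in jsw; lia.
Qed.

Lemma dill_padded_eq_cst q q' p : size q = size q' ->
  (size (image_word f a q) < size (image_word f a q'))%N ->
  dill f (padded a p) =1 dill f (cst a).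
Proof.
move=> qq' lt_qq'; set c := (size (image_word f a q') - size (image_word f a q))%N.
have c0 : (0 < c)%N by rewrite subn_gt0.
set r := size (blocks f (cst a) 1); have r0 : (0 < r)%N := size_blocks f f_neq_nil _ 1.
set B := size (image_word f a p); set T := test_seq p c.+1.
set X := dill f T; set mu := size (blocks f T d.-1).
have Xc : periodic X c.
  apply: (dill_periodic_gap (T := T) _ (repeat_seq_periodic _ _) _ qq' (ltnW lt_qq')).
    by rewrite !size_cat !size_nseq !addnS.
  by move=> j jd; apply: test_seq_head; lia.
have agree j : (j < B + c.+1 * r)%N -> X (mu + j) = dill f (padded a p) j.
  move=> jB; rewrite /X /mu dill_shiftn //; symmetry.
  apply: (@dill_eq_prefix _ _ f f_neq_nil _ _ (size p + c.+1)).
    by move=> i ip; rewrite /shiftn /T test_seq_mid //; lia.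
  by rewrite blocksD size_cat shiftn_padded size_blocks_cst.
have sigma_window i : (i < c + r)%N -> X (mu + B + i) = dill f (cst a) i.
  by move=> icr; rewrite -addnA agree ?dill_padded //; nia.
have sc := periodic_of_window r0 Xc dill_cst_periodic sigma_window.
have Xs : forall i, X (mu + B + i) = dill f (cst a) i.
  by apply: eq_from_window c0 Xc sc _ => i ic; apply: sigma_window; lia.
have Xmu := eq_from_shift c0 Xc sc (dill_cst_periodic_image_word p) Xs.
move=> i; case: (ltnP i B) => iB; first by rewrite -agree ?Xmu //; lia.
by rewrite -(subnKC iB) dill_padded // addnC dill_cst_periodic_image_word.
Qed.

Lemma dill_eq_cst q q' : size q = size q' ->
  (size (image_word f a q) < size (image_word f a q'))%N ->
  forall x, dill f x =1 dill f (cst a).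
Proof.
move=> qq' lt_qq' x n; rewrite -(@dill_padded_eq_cst q q' (mkseq x (n + d)) qq' lt_qq').
apply: (@dill_eq_prefix _ _ f f_neq_nil _ _ n.+1); last exact: size_blocks.
by move=> j jn; rewrite /padded nth_mkseq //; lia.
Qed.

End zero_preserving.

Lemma uniform_of_size_eq (A : finType) d (f : d.-tuple A -> seq A) :
  (forall u v, size (f u) = size (f v)) -> uniform f.
Proof.
move=> fuv; have f_upper u : size (f u) = upper_norm f.
  apply/eqP; rewrite eqn_leq (leq_bigmax_cond u) //= /upper_norm.
  by apply/bigmax_leqP => v _; rewrite (fuv v u) leqnn.
rewrite /uniform /lower_norm; apply: (big_ind (fun n => n = upper_norm f)) => //.
by move=> m n -> ->; rewrite minnn.
Qed.

Lemma dill_const_or_uniform (R : realType) (A : finType) d (f : d.-tuple A -> seq A) :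
  (0 < d)%N -> (forall u, (0 < size (f u))%N) ->
  (forall x y, besic R x y = 0%E -> besic R (dill f x) (dill f y) = 0%E) ->
  (forall x y : nat -> A, dill f x =1 dill f y) \/ uniform f.
Proof.
move=> d0 f_neq_nil dill_besic0.
have [fU|not_fU] := pselect (uniform f); [by right | left].
have size_neq : exists u v, size (f u) != size (f v).
  apply: contrapT => all_eq; apply/not_fU/uniform_of_size_eq => u v.
  by apply/eqP; apply: contrapT => /negP fuv; apply: all_eq; exists u, v.
move=> x y n; have [q [q' [qq' lt_qq']]] := image_word_size_gap f (x 0) d0 size_neq.
by rewrite !(@dill_eq_cst R A d f f_neq_nil dill_besic0 (x 0) q q' qq' lt_qq').
Qed.

Lemma dill_lipschitz_of_const_or_uniform (R : realType) (A : finType) d (f : d.-tuple A -> seq A) :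
  (forall u, (0 < size (f u))%N) ->
  (forall x y : nat -> A, dill f x =1 dill f y) \/ uniform f ->
  forall x y, (besic R (dill f x) (dill f y) <=
    ((d * Dmax f)%:R / (lower_norm f)%:R : R)%:E * besic R x y)%E.
Proof.
move=> f_neq_nil [fconst|fU] x y; last exact: dill_lipschitz.
rewrite (@besic_eq_from R A _ _ 0) => [|j _]; last exact: fconst.
by rewrite mule_ge0 ?besic_ge0 // lee_fin divr_ge0.
Qed.

Lemma besic0_of_lipschitz (R : realType) (A : finType) (F : (nat -> A) -> nat -> A) (c : R) :
  (forall x y, (besic R (F x) (F y) <= c%:E * besic R x y)%E) ->
  forall x y, besic R x y = 0%E -> besic R (F x) (F y) = 0%E.
Proof.
move=> F_lip x y xy0; apply/eqP; rewrite eq_le besic_ge0 andbT.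
by have := F_lip x y; rewrite xy0 mule0.
Qed.

Theorem mainTheorem3 (R : realType) (A : finType) (d : nat)
    (f : d.-tuple A -> seq A) (hd : (1 <= d)%N)
    (hf : forall u, (0 < size (f u))%N) :
  let F := dill f in
  [/\ (forall x y : nat -> A, besic R x y = 0%E -> besic R (F x) (F y) = 0%E)
        <-> (forall x y : nat -> A,
               (besic R (F x) (F y) <=
                ((d * Dmax f)%:R / (lower_norm f)%:R : R)%:E * besic R x y)%E),
      (forall x y : nat -> A,
               (besic R (F x) (F y) <=
                ((d * Dmax f)%:R / (lower_norm f)%:R : R)%:E * besic R x y)%E)
        <-> ((forall x y : nat -> A, F x =1 F y) \/ uniform f)
    & ((forall x y : nat -> A, F x =1 F y) \/ uniform f)
        <-> (forall x y : nat -> A, besic R x y = 0%E -> besic R (F x) (F y) = 0%E)].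
Proof.
move=> F.
have const_of_besic0 := @dill_const_or_uniform R A d f hd hf.
have lip_of_const := @dill_lipschitz_of_const_or_uniform R A d f hf.
have besic0_of_lip := @besic0_of_lipschitz R A F ((d * Dmax f)%:R / (lower_norm f)%:R).
split; split=> H.
- exact/lip_of_const/const_of_besic0.
- exact: besic0_of_lip.
- exact/const_of_besic0/besic0_of_lip.
- exact: lip_of_const.
- exact/besic0_of_lip/lip_of_const.
- exact: const_of_besic0.
Qed.
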